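(* Let $k$ be a field of characteristic $0$. The operad $\mathcal{P}ost\mathcal{L}ie$ is the Koszul dual operad of the operad $\mathcal{C}om\mathcal{T}rias$: $\mathcal{C}om\mathcal{T}rias^!\cong\mathcal{P}ost\mathcal{L}ie$, under the identification of the linear dual of $*$ with $\circ$ and of the linear dual of $\bullet$ with $[\,,\,]$.
   Context: $\mathcal{C}om\mathcal{T}rias$ is the quadratic operad generated by a binary operation $*$ (no symmetry) and a commutative binary operation $\bullet$, with relations $(x*y)*z=x*(y*z)=x*(z*y)$, $(x\bullet y)\bullet z=x\bullet(y\bullet z)$, $x*(y\bullet z)=x*(y*z)$, $(x\bullet y)*z=x\bullet(y*z)$. $\mathcal{P}ost\mathcal{L}ie$ is the quadratic operad generated by a binary operation $\circ$ and an antisymmetric binary operation $[\,,\,]$, with relations: Jacobi for $[\,,\,]$, $(x\circ y)\circ z-x\circ(y\circ z)-(x\circ z)\circ y+x\circ(z\circ y)=x\circ[y,z]$, and $[x,y]\circ z=[x\circ z,y]+[x,y\circ z]$. For a quadratic operad $\mathcal F(V)/(R)$, its Koszul dual is $\mathcal F(V^\vee)/(R^\perp)$, where $V^\vee(n)=V(n)^*\otimes\mathrm{sgn}_n$ and $R^\perp$ is the orthogonal of $R$ under the natural pairing between the two-vertex parts of $\mathcal F(V^\vee)$ and $\mathcal F(V)$. *)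

(* Binary quadratic operads, arity-3 (two-vertex) part. *)
From HB Require Import structures.
From mathcomp Require Import all_boot all_order fingroup perm all_algebra.
Set Implicit Arguments. Unset Strict Implicit. Unset Printing Implicit Defensive.
Import GRing.Theory.
Local Open Scope ring_scope.

Section QuadOp.
Variable k : fieldType.

(* Binary generators: a space V(2) = 'rV[k]_n together with the action of the
   transposition (12) of S_2, given by v |-> v *m t (so (tau.mu)(x,y) = mu(y,x)). *)

(* Two-vertex part F(V)(3) of the free operad: for each c : 'I_3 (the leaf
   attached to the root vertex) a copy of V(2) (x) V(2), encoded as an n x n
   matrix M with M i j the coefficient of  e_i( e_j(x_(c+1), x_(c+2)), x_c )
   (indices mod 3; i = root vertex, j = inner vertex). *)
Definition F3 (n : nat) := {ffun 'I_3 -> 'M[k]_n}.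

(* The tree monomial  mu( nu(x_a, x_b), x_c )  for a, b, c pairwise distinct. *)
Definition node n (t : 'M[k]_n) (mu nu : 'rV[k]_n) (a b c : 'I_3) : F3 n :=
  [ffun c' : 'I_3 => if c' == c then
     (if val a == ((val c).+1 %% 3)%N then mu^T *m nu else mu^T *m (nu *m t))
   else 0].

(* The tree monomial  mu( x_a, nu(x_b, x_c) ) = (tau.mu)( nu(x_b,x_c), x_a ). *)
Definition nodeR n (t : 'M[k]_n) (mu nu : 'rV[k]_n) (a b c : 'I_3) : F3 n :=
  node t (mu *m t) nu b c a.

(* The S_3-submodule of F(V)(3) generated by relations, each relation being
   given as a function of three (distinct) variable labels x y z. *)
Definition rel_space n (rels : seq ('I_3 -> 'I_3 -> 'I_3 -> F3 n)) : {vspace F3 n} :=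
  <<[seq r (s ord0) (s (inord 1)) (s (inord 2)) | r : 'I_3 -> 'I_3 -> 'I_3 -> F3 n <- rels, s : 'S_3 <- enum [set: 'S_3]]>>%VS.

(* Dual generators V^vee(2) = V(2)^* (x) sgn: coordinates in the dual basis,
   transposition acting by  - t^T. *)
Definition dual_twist n (t : 'M[k]_n) : 'M[k]_n := - t^T.

(* Natural pairing between F(V^vee)(3) and F(V)(3): tree-wise product of the
   pairings of the two vertices (Loday--Vallette, cyclic convention). *)
Definition pairing n (Phi : F3 n) (Psi : F3 n) : k :=
  \sum_(c < 3) \sum_(i < n) \sum_(j < n) Phi c i j * Psi c i j.

Definition in_orth n (R : {vspace F3 n}) (Phi : F3 n) : Prop :=
  forall Psi, Psi \in R -> pairing Phi Psi = 0.

Definition e3 (i : 'I_3) : 'rV[k]_3 := \row_j (if j == i then 1 else 0).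

(* basis of V(2): e_0 = *,  e_1 = *^op (x,y |-> y*x),  e_2 = bullet (commutative) *)
Definition tCT : 'M[k]_3 :=
  \matrix_(i, j) (if ((val i == 0%N) && (val j == 1%N)) || ((val i == 1%N) && (val j == 0%N))
                     || ((val i == 2%N) && (val j == 2%N)) then 1 else 0).
Definition star := e3 ord0.
Definition bullet := e3 (inord 2).

Definition ComTrias_rels : seq ('I_3 -> 'I_3 -> 'I_3 -> F3 3) :=
  [:: (* (x*y)*z = x*(y*z) *)
      (fun x y z => node tCT star star x y z - nodeR tCT star star x y z);
      (* x*(y*z) = x*(z*y) *)
      (fun x y z => nodeR tCT star star x y z - nodeR tCT star star x z y);
      (* (x.y).z = x.(y.z) *)
      (fun x y z => node tCT bullet bullet x y z - nodeR tCT bullet bullet x y z);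
      (* x*(y.z) = x*(y*z) *)
      (fun x y z => nodeR tCT star bullet x y z - nodeR tCT star star x y z);
      (* (x.y)*z = x.(y*z) *)
      (fun x y z => node tCT star bullet x y z - nodeR tCT bullet star x y z)].

Definition ComTrias_R : {vspace F3 3} := rel_space ComTrias_rels.

(* generators in V^vee(2) = ComTrias V(2)^* (x) sgn:
   circ = dual of *,   bracket = dual of bullet *)
Definition tPL : 'M[k]_3 := dual_twist tCT.
Definition circ := e3 ord0.
Definition brk := e3 (inord 2).

Definition PostLie_rels : seq ('I_3 -> 'I_3 -> 'I_3 -> F3 3) :=
  [:: (* Jacobi: [[x,y],z] + [[y,z],x] + [[z,x],y] = 0 *)
      (fun x y z => node tPL brk brk x y z + node tPL brk brk y z x + node tPL brk brk z x y);
      (* (x o y) o z - x o (y o z) - (x o z) o y + x o (z o y) = x o [y,z] *)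
      (fun x y z => node tPL circ circ x y z - nodeR tPL circ circ x y z
                    - node tPL circ circ x z y + nodeR tPL circ circ x z y
                    - nodeR tPL circ brk x y z);
      (* [x,y] o z = [x o z, y] + [x, y o z] *)
      (fun x y z => node tPL circ brk x y z - node tPL brk circ x z y
                    - nodeR tPL brk circ x y z)].

Definition PostLie_R : {vspace F3 3} := rel_space PostLie_rels.

End QuadOp.

(* ComTrias_R^perp is computed from integral certificates.  Every instance of a
   PostLie relation pairs to zero with every instance of a ComTrias relation, so
   PostLie_R lies in ComTrias_R^perp.  Conversely, seven PostLie relation
   instances P_m have pivot coordinates p_m with P_m(p_m') = delta_mm', and for
   every coordinate v the vector e_v - sum_m P_m(v) e_(p_m) is an explicit integer
   combination of ComTrias relation instances; pairing it with Phi in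
   ComTrias_R^perp gives Phi = sum_m Phi(p_m) P_m.  Both facts are identities
   between integer arrays, checked by evaluation and carried to k by the ring
   morphism int -> k.  Nothing is ever divided. *)

From HB Require Import structures.
From mathcomp Require Import all_boot all_order fingroup perm all_algebra.

Set Implicit Arguments. Unset Strict Implicit. Unset Printing Implicit Defensive.
Import GRing.Theory.
Local Open Scope ring_scope.

Section Pairing.
Variables (k : fieldType) (n : nat).
Implicit Types (Phi Psi : F3 k n) (R : {vspace F3 k n}).

Lemma pairingC Phi Psi : pairing Phi Psi = pairing Psi Phi.
Proof.
apply: eq_bigr => c _; apply: eq_bigr => i _; apply: eq_bigr => j _.
exact: mulrC.
Qed.

Lemma pairing_is_linear Phi : scalar (pairing Phi).
Proof.
move=> a Psi Psi'; rewrite /pairing mulr_sumr -big_split; apply: eq_bigr => c _.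
rewrite mulr_sumr -big_split; apply: eq_bigr => i _.
rewrite mulr_sumr -big_split; apply: eq_bigr => j _.
by rewrite !ffunE !mxE mulrDr mulrCA.
Qed.

HB.instance Definition _ Phi :=
  GRing.isLinear.Build k (F3 k n) k *%R (pairing Phi) (pairing_is_linear Phi).

Definition unitF3 (c : 'I_3) (i j : 'I_n) : F3 k n :=
  [ffun c' => if c' == c then delta_mx i j else 0].

Lemma pairing_unitr Phi c i j : pairing Phi (unitF3 c i j) = Phi c i j.
Proof.
rewrite /pairing (bigD1 c) //= [X in _ + X]big1 => [|c' /negPf nc'c]; last first.
  by apply: big1 => i' _; apply: big1 => j' _; rewrite ffunE nc'c mxE mulr0.
rewrite addr0 (bigD1 i) //= [X in _ + X]big1 => [|i' /negPf ni'i]; last first.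
  by apply: big1 => j' _; rewrite ffunE eqxx mxE ni'i mulr0.
rewrite addr0 (bigD1 j) //= [X in _ + X]big1 => [|j' /negPf nj'j]; last first.
  by rewrite ffunE eqxx mxE eqxx nj'j mulr0.
by rewrite ffunE eqxx mxE !eqxx mulr1 addr0.
Qed.

Lemma pairing_span_eq0 Phi (X : seq (F3 k n)) Psi :
  {in X, forall x, pairing Phi x = 0} -> Psi \in <<X>>%VS -> pairing Phi Psi = 0.
Proof.
move=> PhiX /(coord_span (X := in_tuple X)) ->; rewrite linear_sum big1 // => i _.
by rewrite linearZ /= PhiX ?mulr0 // mem_nth.
Qed.

Lemma in_orth_span (X Y : seq (F3 k n)) Phi :
  {in Y & X, forall y x, pairing y x = 0} -> Phi \in <<Y>>%VS -> in_orth <<X>>%VS Phi.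
Proof.
move=> YX PhiY Psi PsiX; rewrite pairingC; apply: pairing_span_eq0 PhiY => y yY.
by rewrite pairingC; apply: pairing_span_eq0 PsiX => x xX; apply: YX.
Qed.

Lemma in_orth_expand R (B : seq (F3 k n * F3 k n)) :
  (forall c i j, unitF3 c i j - \sum_(b <- B) b.2 c i j *: b.1 \in R) ->
  forall Phi, in_orth R Phi -> Phi = \sum_(b <- B) pairing Phi b.1 *: b.2.
Proof.
move=> BR Phi PhiR; apply/ffunP => c; apply/matrixP => i j.
move/eqP: (PhiR _ (BR c i j)); rewrite linearB /= pairing_unitr linear_sum subr_eq0 => /eqP ->.
rewrite sum_ffunE summxE; apply: eq_bigr => b _.
by rewrite linearZ !ffunE !mxE mulrC.
Qed.

End Pairing.

Lemma uniq_perm_labels (s : 'S_3) : uniq [:: s ord0; s (inord 1); s (inord 2)].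
Proof.
rewrite (map_inj_uniq perm_inj [:: ord0; inord 1; inord 2]) /=.
by rewrite !inE -!val_eqE /= !inordK.
Qed.

Lemma perm_of_labels (x y z : 'I_3) : uniq [:: x; y; z] ->
  exists s : 'S_3, [/\ s ord0 = x, s (inord 1) = y & s (inord 2) = z].
Proof.
move=> xyz; pose f (i : 'I_3) := nth x [:: x; y; z] i.
have f_inj : injective f.
  by move=> i j /eqP; rewrite /f nth_uniq // => /eqP /val_inj.
by exists (perm f_inj); rewrite !permE /f !inordK.
Qed.

Section RelationSpace.
Variables (k : fieldType) (n : nat).
Local Notation relation := ('I_3 -> 'I_3 -> 'I_3 -> F3 k n).

Definition rel_gens (rels : seq relation) : seq (F3 k n) :=
  [seq r (s ord0) (s (inord 1)) (s (inord 2))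
     | r : relation <- rels, s : 'S_3 <- enum [set: 'S_3]].

Lemma rel_gensP (rels : seq relation) v :
  reflect (exists x y z : 'I_3, uniq [:: x; y; z] && (v \in [seq r x y z | r <- rels]))
          (v \in rel_gens rels).
Proof.
apply: (iffP idP) => [|[x [y [z /andP [/perm_of_labels [s [<- <- <-]]]]]]].
  elim: rels => //= r rels IH; rewrite mem_cat => /orP [/mapP [s _ ->] | /IH].
    exists (s ord0), (s (inord 1)), (s (inord 2)).
    by rewrite mem_head andbT; exact: uniq_perm_labels.
  by case=> x [y [z /andP [xyz v_rels]]]; exists x, y, z; rewrite xyz inE v_rels orbT.
elim: rels => //= r rels IH; rewrite inE mem_cat => /orP [/eqP -> | /IH ->].
  by rewrite (map_f (fun s : 'S_3 => r (s ord0) (s (inord 1)) (s (inord 2)))) ?mem_enum ?inE.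
by rewrite orbT.
Qed.

Lemma mem_rel_space (rels : seq relation) (x y z : 'I_3) v :
  uniq [:: x; y; z] -> v \in [seq r x y z | r <- rels] -> v \in rel_space rels.
Proof.
by move=> xyz v_rels; apply/memv_span/rel_gensP; exists x, y, z; rewrite xyz.
Qed.

End RelationSpace.

(* Integer shadows of F3 k 3 and of labelled relations.  They are indexed by
   naturals and sum with foldr, since ordinals, finfuns and the locked bigops
   do not evaluate, and the certificates below are checked by evaluation. *)
Definition F3Z := nat -> nat -> nat -> int.
Definition relZ := nat -> nat -> nat -> nat -> F3Z.

Definition sumZ (T : Type) (s : seq T) (f : T -> int) : int :=
  foldr (fun x acc => f x + acc) 0 s.

Definition all3 (P : nat -> nat -> nat -> bool) : bool :=
  all (fun x => all (fun y => all (P x y) (iota 0 3)) (iota 0 3)) (iota 0 3).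

Definition dotZ (f g : F3Z) : int :=
  sumZ (iota 0 3) (fun c => sumZ (iota 0 3) (fun i => sumZ (iota 0 3) (fun j =>
    f c i j * g c i j))).

Definition addZ (f g : F3Z) : F3Z := fun c i j => f c i j + g c i j.
Definition subZ (f g : F3Z) : F3Z := fun c i j => f c i j - g c i j.
Local Notation "f \+ g" := (addZ f g).
Local Notation "f \- g" := (subZ f g).

Definition unitZ (p : nat * nat * nat) : F3Z :=
  fun c i j => if (c, i, j) == p then 1 else 0.
Definition rowZ (p : nat) : nat -> int := fun j => if j == p then 1 else 0.
Definition rmulZ (mu : nat -> int) (t : nat -> nat -> int) : nat -> int :=
  fun j => sumZ (iota 0 3) (fun l => mu l * t l j).

Definition nodeZ (t : nat -> nat -> int) (mu nu : nat -> int) (a b c : nat) : F3Z :=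
  fun c' i j => if c' == c then
    (if a == (c.+1 %% 3)%N then mu i * nu j else mu i * rmulZ nu t j) else 0.
Definition nodeRZ t mu nu (a b c : nat) : F3Z := nodeZ t (rmulZ mu t) nu b c a.

Record term := Term { coef : int; rel_idx : nat; label1 : nat; label2 : nat; label3 : nat }.

Definition valid_term (nrels : nat) (t : term) : bool :=
  [&& rel_idx t < nrels, uniq [:: label1 t; label2 t; label3 t] &
      all (fun x => x < 3) [:: label1 t; label2 t; label3 t]]%N.

Definition termZ (rz : relZ) (t : term) : F3Z :=
  fun c i j => coef t * rz (rel_idx t) (label1 t) (label2 t) (label3 t) c i j.
Definition combZ (rz : relZ) (l : seq term) : F3Z :=
  fun c i j => sumZ l (fun t => termZ rz t c i j).

Lemma sumZE (T : Type) (s : seq T) f : sumZ s f = \sum_(x <- s) f x.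
Proof. by elim: s => [|x s IH]; rewrite ?big_nil ?big_cons //= IH. Qed.

Lemma all3P P : all3 P -> forall x y z : 'I_3, P x y z.
Proof.
rewrite /all3 => /allP P3 x y z.
have mem_iota3 (u : 'I_3) : val u \in iota 0 3 by rewrite mem_iota ltn_ord.
by move: (P3 _ (mem_iota3 x)) => /allP /(_ _ (mem_iota3 y)) /allP /(_ _ (mem_iota3 z)).
Qed.

Section IntegralModel.
Variable k : fieldType.

Definition intF3 (f : F3Z) : F3 k 3 := [ffun c : 'I_3 => \matrix_(i < 3, j < 3) (f c i j)%:~R].
Definition intRow (mu : nat -> int) : 'rV[k]_3 := \row_(j < 3) (mu j)%:~R.
Definition intMx (t : nat -> nat -> int) : 'M[k]_3 := \matrix_(i < 3, j < 3) (t i j)%:~R.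

Lemma intF3E f (c i j : 'I_3) : intF3 f c i j = (f c i j)%:~R.
Proof. by rewrite ffunE mxE. Qed.

Lemma intF3D f g : intF3 f + intF3 g = intF3 (f \+ g).
Proof. by apply/ffunP => c; apply/matrixP => i j; rewrite !ffunE !mxE intrD. Qed.

Lemma intF3B f g : intF3 f - intF3 g = intF3 (f \- g).
Proof. by apply/ffunP => c; apply/matrixP => i j; rewrite !ffunE !mxE intrB. Qed.

Lemma intF3_unit (c i j : 'I_3) : unitF3 k c i j = intF3 (unitZ (c : nat, i : nat, j : nat)).
Proof.
apply/ffunP => c'; apply/matrixP => i' j'; rewrite !ffunE !mxE /unitZ !xpair_eqE !val_eqE.
by case: (c' == c); rewrite ?mxE //; case: (i' == i); case: (j' == j).
Qed.

Lemma intr_sumZ3 (F : nat -> int) : \sum_(i < 3) (F i)%:~R = (sumZ (iota 0 3) F)%:~R :> k.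
Proof. by rewrite sumZE rmorph_sum -(big_mkord xpredT (fun i => (F i)%:~R)). Qed.

Lemma pairing_intF3 f g : pairing (intF3 f) (intF3 g) = (dotZ f g)%:~R.
Proof.
rewrite /dotZ -intr_sumZ3; apply: eq_bigr => c _; rewrite -intr_sumZ3; apply: eq_bigr => i _.
by rewrite -intr_sumZ3; apply: eq_bigr => j _; rewrite !intF3E intrM.
Qed.

Lemma intRow_mul mu t : intRow mu *m intMx t = intRow (rmulZ mu t).
Proof.
apply/matrixP => i j; rewrite !mxE -intr_sumZ3.
by apply: eq_bigr => l _; rewrite !mxE intrM.
Qed.

Lemma intF3_node t mu nu (a b c : 'I_3) :
  node (intMx t) (intRow mu) (intRow nu) a b c = intF3 (nodeZ t mu nu a b c).
Proof.
apply/ffunP => c'; rewrite !ffunE /nodeZ -val_eqE.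
case: ifP => _; last by apply/matrixP => i j; rewrite !mxE.
by case: ifP => _; apply/matrixP => i j; rewrite ?intRow_mul !mxE big_ord1 !mxE intrM.
Qed.

Lemma intF3_nodeR t mu nu (a b c : 'I_3) :
  nodeR (intMx t) (intRow mu) (intRow nu) a b c = intF3 (nodeRZ t mu nu a b c).
Proof. by rewrite /nodeR intRow_mul intF3_node. Qed.

Lemma intRow_e3 (p : 'I_3) : e3 k p = intRow (rowZ p).
Proof. by apply/matrixP => i j; rewrite !mxE /rowZ val_eqE; case: (j == p). Qed.

End IntegralModel.

Lemma uniq_val3 (x y z : 'I_3) : uniq [:: x : nat; y : nat; z : nat] = uniq [:: x; y; z].
Proof. exact: (map_inj_uniq val_inj [:: x; y; z]). Qed.

Section Models.
Variable k : fieldType.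
Local Notation relation := ('I_3 -> 'I_3 -> 'I_3 -> F3 k 3).

Definition models (rels : seq relation) (rz : relZ) : Prop :=
  forall x y z : 'I_3,
    [seq r x y z | r <- rels] = [seq intF3 k (rz r x y z) | r <- iota 0 (size rels)].

Lemma intF3_term rz t :
  intF3 k (termZ rz t)
  = (coef t)%:~R *: intF3 k (rz (rel_idx t) (label1 t) (label2 t) (label3 t)).
Proof. by apply/ffunP => c; apply/matrixP => i j; rewrite !ffunE !mxE intrM. Qed.

Lemma intF3_comb rz l : intF3 k (combZ rz l) = \sum_(t <- l) intF3 k (termZ rz t).
Proof.
apply/ffunP => c; apply/matrixP => i j.
rewrite sum_ffunE summxE intF3E /combZ sumZE rmorph_sum.
by apply: eq_bigr => t _; rewrite intF3E.
Qed.

Lemma mem_term rels rz t :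
  models rels rz -> valid_term (size rels) t -> intF3 k (termZ rz t) \in rel_space rels.
Proof.
case: t => a r x y z rels_rz /and3P [/= r_lt xyz /and4P [x3 y3 z3 _]].
rewrite intF3_term /=; apply: memvZ.
apply: (@mem_rel_space _ _ _ (Ordinal x3) (Ordinal y3) (Ordinal z3)).
  by rewrite -uniq_val3.
by rewrite rels_rz; apply: map_f; rewrite mem_iota.
Qed.

Lemma mem_sum_terms rels rz (I : Type) (l : seq I) (t : I -> term) (a : I -> k) :
  models rels rz -> all (fun i => valid_term (size rels) (t i)) l ->
  \sum_(i <- l) a i *: intF3 k (termZ rz (t i)) \in rel_space rels.
Proof.
move=> rels_rz; elim: l => [|i l IH]; first by rewrite big_nil mem0v.
by rewrite big_cons /= => /andP [ti l_valid]; rewrite memvD ?memvZ ?mem_term ?IH.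
Qed.

Lemma mem_comb rels rz l : models rels rz -> all (valid_term (size rels)) l ->
  intF3 k (combZ rz l) \in rel_space rels.
Proof.
move=> rels_rz l_valid; rewrite intF3_comb.
under eq_bigr do rewrite -[intF3 k _]scale1r.
exact: mem_sum_terms.
Qed.

Definition orthZ (rz rz' : relZ) (nrels nrels' : nat) : bool :=
  all3 (fun x y z => uniq [:: x; y; z] ==> all3 (fun x' y' z' => uniq [:: x'; y'; z'] ==>
    all (fun r => all (fun r' => dotZ (rz r x y z) (rz' r' x' y' z') == 0)
      (iota 0 nrels')) (iota 0 nrels))).

Lemma rel_space_orth rels rels' rz rz' :
  models rels rz -> models rels' rz' -> orthZ rz rz' (size rels) (size rels') ->
  forall Phi, Phi \in rel_space rels -> in_orth (rel_space rels') Phi.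
Proof.
move=> rels_rz rels'_rz' /all3P orth Phi; apply: in_orth_span.
move=> u v /rel_gensP [x [y [z /andP [xyz]]]]; rewrite rels_rz => /mapP [r r_lt ->].
move=> /rel_gensP [x' [y' [z' /andP [xyz']]]]; rewrite rels'_rz' => /mapP [r' r'_lt ->].
move: (orth x y z); rewrite uniq_val3 xyz => /all3P /(_ x' y' z').
rewrite uniq_val3 xyz' => /allP /(_ r r_lt) /allP /(_ r' r'_lt) /eqP dot0.
by rewrite pairing_intF3 dot0.
Qed.

Definition expandsZ (rz P : relZ) (basis : seq (nat * nat * nat * term))
    (cert : nat -> nat -> nat -> seq term) : bool :=
  all3 (fun c i j => all3 (fun c' i' j' =>
    unitZ (c, i, j) c' i' j'
      - sumZ basis (fun b => termZ P b.2 c i j * unitZ b.1 c' i' j')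
    == combZ rz (cert c i j) c' i' j')).

Definition intBasis (P : relZ) (basis : seq (nat * nat * nat * term)) :=
  [seq (intF3 k (unitZ b.1), intF3 k (termZ P b.2)) | b <- basis].

Lemma rel_space_expansion rels rz P basis cert :
  models rels rz -> all3 (fun c i j => all (valid_term (size rels)) (cert c i j)) ->
  expandsZ rz P basis cert ->
  forall c i j : 'I_3,
    unitF3 k c i j - \sum_(b <- intBasis P basis) b.2 c i j *: b.1 \in rel_space rels.
Proof.
move=> rels_rz /all3P cert_valid /all3P expands c i j.
suff -> : unitF3 k c i j - \sum_(b <- intBasis P basis) b.2 c i j *: b.1
          = intF3 k (combZ rz (cert c i j)).
  exact: mem_comb rels_rz (cert_valid c i j).
apply/ffunP => c'; apply/matrixP => i' j'.
rewrite intF3E; move/all3P/(_ c' i' j')/eqP: (expands c i j) <-.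
rewrite intF3_unit !ffunE !mxE sum_ffunE summxE big_map intrB sumZE rmorph_sum.
by congr (_ - _); apply: eq_bigr => b _; rewrite /= !ffunE !mxE intrM.
Qed.

End Models.

Definition tCTZ (i j : nat) : int :=
  if (((i == 0) && (j == 1)) || ((i == 1) && (j == 0)) || ((i == 2) && (j == 2)))%N
  then 1 else 0.
Definition tPLZ (i j : nat) : int := - tCTZ j i.

Definition comtriasZ : relZ := fun r x y z =>
  let star := rowZ 0 in let bullet := rowZ 2 in
  match r with
  | 0 => nodeZ tCTZ star star x y z \- nodeRZ tCTZ star star x y z
  | 1 => nodeRZ tCTZ star star x y z \- nodeRZ tCTZ star star x z y
  | 2 => nodeZ tCTZ bullet bullet x y z \- nodeRZ tCTZ bullet bullet x y z
  | 3 => nodeRZ tCTZ star bullet x y z \- nodeRZ tCTZ star star x y z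
  | 4 => nodeZ tCTZ star bullet x y z \- nodeRZ tCTZ bullet star x y z
  | _ => fun _ _ _ => 0
  end.

Definition postlieZ : relZ := fun r x y z =>
  let circ := rowZ 0 in let brk := rowZ 2 in
  match r with
  | 0 => nodeZ tPLZ brk brk x y z \+ nodeZ tPLZ brk brk y z x \+ nodeZ tPLZ brk brk z x y
  | 1 => nodeZ tPLZ circ circ x y z \- nodeRZ tPLZ circ circ x y z
         \- nodeZ tPLZ circ circ x z y \+ nodeRZ tPLZ circ circ x z y
         \- nodeRZ tPLZ circ brk x y z
  | 2 => nodeZ tPLZ circ brk x y z \- nodeZ tPLZ brk circ x z y
         \- nodeRZ tPLZ brk circ x y z
  | _ => fun _ _ _ => 0
  end.

Section ConcreteModels.
Variable k : fieldType.

Lemma intMx_tCT : tCT k = intMx k tCTZ.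
Proof. by apply/matrixP => i j; rewrite !mxE /tCTZ; case: ifP. Qed.

Lemma intMx_tPL : tPL k = intMx k tPLZ.
Proof. by apply/matrixP => i j; rewrite /tPL /dual_twist intMx_tCT !mxE intrN. Qed.

Lemma comtrias_model : models (ComTrias_rels k) comtriasZ.
Proof.
move=> x y z; rewrite /ComTrias_rels /= /star /bullet !intRow_e3 inordK // intMx_tCT.
by rewrite !intF3_node !intF3_nodeR !intF3B.
Qed.

Lemma postlie_model : models (PostLie_rels k) postlieZ.
Proof.
move=> x y z; rewrite /PostLie_rels /= /circ /brk !intRow_e3 inordK // intMx_tPL.
by rewrite !intF3_node !intF3_nodeR !(intF3B, intF3D).
Qed.

End ConcreteModels.

(* Pairs (pivot coordinate p_m, PostLie relation instance P_m normalised at p_m). *)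
Definition postlie_basis : seq (nat * nat * nat * term) :=
  [:: ((0, 2, 2), Term 1 0 0 1 2);
      ((0, 1, 0), Term 1 1 0 1 2);
      ((0, 0, 0), Term (-1) 1 1 0 2);
      ((0, 0, 1), Term 1 1 2 0 1);
      ((0, 2, 0), Term 1 2 0 1 2);
      ((0, 2, 1), Term (-1) 2 0 2 1);
      ((0, 0, 2), Term 1 2 1 2 0)]%N.

Definition comtrias_cert (c i j : nat) : seq term :=
  match c, i, j with
  | 0, 1, 1 => [:: Term (-1) 1 0 1 2]
  | 0, 1, 2 => [:: Term 1 3 0 1 2]
  | 1, 0, 0 => [:: Term 1 0 2 0 1; Term (-1) 0 2 1 0; Term 1 1 2 0 1]
  | 1, 0, 1 => [:: Term 1 0 0 2 1; Term (-1) 1 0 1 2]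
  | 1, 0, 2 => [:: Term 1 4 0 2 1]
  | 1, 1, 0 => [:: Term (-1) 0 1 2 0]
  | 1, 1, 1 => [:: Term (-1) 0 1 2 0; Term 1 1 1 0 2]
  | 1, 1, 2 => [:: Term (-1) 0 1 2 0; Term 1 1 1 0 2; Term 1 3 1 0 2]
  | 1, 2, 0 => [:: Term (-1) 4 1 2 0]
  | 1, 2, 1 => [:: Term 1 4 0 1 2; Term (-1) 4 1 0 2]
  | 1, 2, 2 => [:: Term 1 2 0 2 1]
  | 2, 0, 0 => [:: Term 1 0 0 1 2]
  | 2, 0, 1 => [:: Term 1 0 1 0 2; Term (-1) 0 1 2 0; Term 1 1 1 0 2]
  | 2, 0, 2 => [:: Term 1 4 0 1 2]
  | 2, 1, 0 => [:: Term (-1) 0 2 1 0; Term 1 1 2 0 1]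
  | 2, 1, 1 => [:: Term (-1) 0 2 1 0]
  | 2, 1, 2 => [:: Term (-1) 0 2 1 0; Term 1 1 2 0 1; Term 1 3 2 0 1]
  | 2, 2, 0 => [:: Term 1 4 0 2 1; Term (-1) 4 2 0 1]
  | 2, 2, 1 => [:: Term (-1) 4 2 1 0]
  | 2, 2, 2 => [:: Term 1 2 0 1 2]
  | _, _, _ => [::]
  end.

Lemma postlie_basis_valid : all (fun b => valid_term 3 b.2) postlie_basis.
Proof. by []. Qed.

Lemma comtrias_cert_valid : all3 (fun c i j => all (valid_term 5) (comtrias_cert c i j)).
Proof. by []. Qed.

Lemma comtrias_expandsZ : expandsZ comtriasZ postlieZ postlie_basis comtrias_cert.
Proof. by vm_compute. Qed.

Lemma postlie_comtrias_orthZ : orthZ postlieZ comtriasZ 3 5.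
Proof. by vm_compute. Qed.

Theorem mainTheorem14 (k : fieldType) (hk : [pchar k] =i pred0) :
  forall Phi : F3 k 3, in_orth (ComTrias_R k) Phi <-> Phi \in PostLie_R k.
Proof.
move=> Phi; split.
  move=> /(in_orth_expand (rel_space_expansion (comtrias_model k) comtrias_cert_valid
                                                comtrias_expandsZ)) ->.
  by rewrite big_map; apply: mem_sum_terms (postlie_model k) postlie_basis_valid.
exact: rel_space_orth (postlie_model k) (comtrias_model k) postlie_comtrias_orthZ Phi.
Qed.
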